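(* Let $p>1$ and $0\le a<p-1$. For every nonnegative nonincreasing sequence $x=(x_n)_{n\ge1}$ with $\sum_{n=1}^\infty x_n^p n^a<\infty$, $$\|x\|_{\ell^p(n^a)}\;\le\;\frac{1}{\zeta(p-a)^{1/p}}\,\|Cx\|_{\ell^p(n^a)},$$ where $\zeta$ is the Riemann zeta function. Moreover, the constant $\zeta(p-a)^{-1/p}$ is optimal (it is attained, e.g., for the sequence $x=(1,0,0,\dots)$).
   Context: For $p>1$ and $a\in\mathbb R$, $\|x\|_{\ell^p(n^a)}=\bigl(\sum_{n=1}^\infty |x_n|^p n^a\bigr)^{1/p}$. The discrete Hardy (Cesàro) operator is $(Cx)_n=\frac1n\sum_{k=1}^n|x_k|$. *)

From Stdlib Require Import Reals.
From Coquelicot Require Import Coquelicot.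
Open Scope R_scope.

(* Sequences x = (x_n)_{n>=1} are encoded as x : nat -> R with
   x k standing for x_{k+1}. *)

(* Real power with the convention 0^y = 0 for nonpositive bases
   (only used with y > 0, where this agrees with the usual x^y, x >= 0). *)
Definition rpow (x y : R) : R := if Rlt_dec 0 x then Rpower x y else 0.

Definition wterm (p a : R) (x : nat -> R) (k : nat) : R :=
  rpow (Rabs (x k)) p * Rpower (INR (S k)) a.

Definition wnorm (p a : R) (x : nat -> R) : R :=
  rpow (Series (wterm p a x)) (/ p).

Definition cesaro (x : nat -> R) (k : nat) : R :=
  / INR (S k) * sum_f_R0 (fun j => Rabs (x j)) k.

Definition zeta (s : R) : R := Series (fun k => / Rpower (INR (S k)) s).

Definition nonneg_nonincr (x : nat -> R) : Prop :=
  (forall k, 0 <= x k) /\ (forall k, x (S k) <= x k).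

Definition e1 (k : nat) : R := match k with O => 1 | _ => 0 end.

(* Put s = p - a > 1 and S_n = x_1 + ... + x_n, so that ||Cx||^p = sum_n S_n^p n^-s.
   Finiteness of this sum is Hardy's inequality: sum by parts against the telescoping
   majorant n^-s <= C (n^(1-s) - (n+1)^(1-s)), bound the increments of S_n^p by the mean
   value theorem, and absorb with Young's inequality.
   For the sharp bound, convexity of t^p and monotonicity of x give
   S_n^p >= sum_{k<=n} x_k^p (k^p - (k-1)^p); summing by parts against n^-s yields
   ||Cx||^p >= sum_k x_k^p (k^p - (k-1)^p) T_k with T_k = sum_{n>=k} n^-s.  Grouping the
   tail in blocks of length k shows T_{k+1} >= k^(1-s) (zeta(s) - 1), which makes the
   partial sums of (k^p - (k-1)^p) T_k dominate zeta(s) times those of k^a; Abel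
   summation against the nonincreasing x_k^p concludes. *)

From Stdlib Require Import Reals Lra Lia.
From Coquelicot Require Import Coquelicot.
Open Scope R_scope.

Fixpoint psum (f : nat -> R) (n : nat) : R :=
  match n with O => 0 | S j => psum f j + f j end.

Lemma psum_ext f g n : (forall i, f i = g i) -> psum f n = psum g n.
Proof. intros H; induction n as [|n IH]; simpl; [reflexivity|]. rewrite IH, H; reflexivity. Qed.

Lemma psum_le f g n : (forall i, (i < n)%nat -> f i <= g i) -> psum f n <= psum g n.
Proof.
  induction n as [|n IH]; intros H; simpl; [lra|].
  assert (psum f n <= psum g n) by (apply IH; intros; apply H; lia).
  assert (f n <= g n) by (apply H; lia).
  lra.
Qed.

Lemma psum_nonneg f n : (forall i, 0 <= f i) -> 0 <= psum f n.
Proof.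
  intros H; induction n as [|n IH]; simpl; [lra|].
  specialize (H n); lra.
Qed.

Lemma psum_le_psum f m n :
  (forall i, (i < n)%nat -> 0 <= f i) -> (m <= n)%nat -> psum f m <= psum f n.
Proof.
  intros H Hmn; induction Hmn as [|n Hmn IH]; simpl; [lra|].
  assert (psum f m <= psum f n) by (apply IH; intros; apply H; lia).
  assert (0 <= f n) by (apply H; lia).
  lra.
Qed.

Lemma psum_plus f g n : psum (fun i => f i + g i) n = psum f n + psum g n.
Proof. induction n as [|n IH]; simpl; [ring|]. rewrite IH; ring. Qed.

Lemma psum_minus f g n : psum (fun i => f i - g i) n = psum f n - psum g n.
Proof. induction n as [|n IH]; simpl; [ring|]. rewrite IH; ring. Qed.

Lemma psum_scal c f n : psum (fun i => c * f i) n = c * psum f n.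
Proof. induction n as [|n IH]; simpl; [ring|]. rewrite IH; ring. Qed.

Lemma psum_const c n : psum (fun _ => c) n = INR n * c.
Proof. induction n as [|n IH]; simpl psum; [simpl; ring|]. rewrite IH, S_INR; ring. Qed.

Lemma psum_telescope f n : psum (fun i => f (S i) - f i) n = f n - f O.
Proof. induction n as [|n IH]; simpl; [ring|]. rewrite IH; ring. Qed.

Lemma psum_by_parts T D N :
  psum (fun n => (T n - T (S n)) * psum D (S n)) N
  = psum (fun i => D i * T i) N - T N * psum D N.
Proof. induction N as [|N IH]; simpl in *; [ring|]. rewrite IH; ring. Qed.

Lemma abel_nonneg y e n :
  (forall k, 0 <= y k) -> (forall k, y (S k) <= y k) -> (forall m, 0 <= psum e m) ->
  0 <= psum (fun i => y i * e i) n.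
Proof.
  intros Hy Hdec He.
  assert (Key : forall m, y m * psum e (S m) <= psum (fun i => y i * e i) (S m)).
  { induction m as [|m IH]; [simpl; lra|].
    change (psum e (S (S m))) with (psum e (S m) + e (S m)).
    change (psum (fun i => y i * e i) (S (S m)))
      with (psum (fun i => y i * e i) (S m) + y (S m) * e (S m)).
    assert (y (S m) * psum e (S m) <= y m * psum e (S m))
      by (apply Rmult_le_compat_r; [apply (He (S m)) | apply Hdec]).
    lra. }
  destruct n as [|m]; simpl; [lra|].
  apply Rle_trans with (y m * psum e (S m)); [apply Rmult_le_pos; auto | apply Key].
Qed.

Lemma psum_sum_f_R0 f n : psum f (S n) = sum_f_R0 f n.
Proof. induction n as [|n IH]; simpl in *; [ring | rewrite <- IH; reflexivity]. Qed.

Lemma is_series_psum f l : is_series f l <-> is_lim_seq (psum f) l.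
Proof.
  assert (E : forall n, sum_n f n = psum f (S n))
    by (intros; rewrite sum_n_Reals, psum_sum_f_R0; reflexivity).
  rewrite (is_lim_seq_incr_1 (psum f) l).
  split; intros H.
  - apply (is_lim_seq_ext (sum_n f)); [exact E | exact H].
  - apply (is_lim_seq_ext _ (sum_n f)) in H; [exact H | intros; rewrite E; reflexivity].
Qed.

Lemma is_lim_seq_ub u (l c : R) : (forall n, u n <= c) -> is_lim_seq u l -> l <= c.
Proof.
  intros H Hl; apply (is_lim_seq_le u (fun _ => c) l c H Hl), is_lim_seq_const.
Qed.

Lemma psum_le_Series f n : (forall i, 0 <= f i) -> ex_series f -> psum f n <= Series f.
Proof.
  intros Hf [l Hl]; rewrite (is_series_unique f l Hl).
  apply is_series_psum in Hl.
  apply (is_lim_seq_le_loc (fun _ => psum f n) (psum f) (psum f n) l);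
    [exists n; intros k Hk; apply psum_le_psum; auto | apply is_lim_seq_const | exact Hl].
Qed.

Lemma ex_series_psum_bounded f B :
  (forall i, 0 <= f i) -> (forall n, psum f n <= B) -> ex_series f.
Proof.
  intros Hf HB.
  destruct (ex_finite_lim_seq_incr (psum f) B) as [l Hl]; auto.
  - intros n; simpl; specialize (Hf n); lra.
  - exists l; apply is_series_psum; exact Hl.
Qed.

Lemma Rpower_pos x y : 0 < Rpower x y.
Proof. apply exp_pos. Qed.

Lemma Rpower_Rinv u y : 0 < u -> Rpower (/ u) y = / Rpower u y.
Proof.
  intros Hu; unfold Rpower; rewrite ln_Rinv by exact Hu.
  rewrite <- exp_Ropp; f_equal; ring.
Qed.

Lemma rpow_0_l y : rpow 0 y = 0.
Proof. unfold rpow; destruct (Rlt_dec 0 0); [lra | reflexivity]. Qed.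

Lemma rpow_Rpower x y : 0 < x -> rpow x y = Rpower x y.
Proof. intros H; unfold rpow; destruct (Rlt_dec 0 x); [reflexivity | lra]. Qed.

Lemma rpow_ge0 x y : 0 <= rpow x y.
Proof. unfold rpow; destruct (Rlt_dec 0 x); [left; apply exp_pos | lra]. Qed.

Lemma rpow_le u v y : 0 <= y -> 0 <= u <= v -> rpow u y <= rpow v y.
Proof.
  intros Hy [[Hu | <-] Huv].
  - rewrite !rpow_Rpower by lra; apply Rle_Rpower_l; lra.
  - rewrite rpow_0_l; apply rpow_ge0.
Qed.

Lemma rpow_mult u v y : 0 <= u -> 0 <= v -> rpow (u * v) y = rpow u y * rpow v y.
Proof.
  intros [Hu | <-] [Hv | <-]; rewrite ?Rmult_0_l, ?Rmult_0_r, ?rpow_0_l; try ring.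
  rewrite !rpow_Rpower by nra; symmetry; apply Rpower_mult_distr; lra.
Qed.

Lemma rpow_plus u y z : 0 <= u -> rpow u (y + z) = rpow u y * rpow u z.
Proof.
  intros [Hu | <-]; [rewrite !rpow_Rpower by lra; apply Rpower_plus | rewrite !rpow_0_l; ring].
Qed.

Lemma rpow_1 u : 0 <= u -> rpow u 1 = u.
Proof. intros [Hu | <-]; [rewrite rpow_Rpower by lra; apply Rpower_1, Hu | apply rpow_0_l]. Qed.

Lemma Rpower_1_l y : Rpower 1 y = 1.
Proof. unfold Rpower; rewrite ln_1, Rmult_0_r; apply exp_0. Qed.

Lemma rpow_succ u y : 0 <= u -> rpow u (1 + y) = u * rpow u y.
Proof. intros Hu; rewrite rpow_plus, rpow_1 by exact Hu; reflexivity. Qed.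

Lemma derivable_pt_lim_Rpower_shift q h t : 0 < t + h ->
  derivable_pt_lim (fun t => Rpower (t + h) q) t (q * Rpower (t + h) (q - 1)).
Proof.
  intros H.
  replace (q * Rpower (t + h) (q - 1)) with (q * Rpower (t + h) (q - 1) * (1 + 0)) by ring.
  apply (derivable_pt_lim_comp (fun t => t + h) (fun u => Rpower u q)).
  - apply derivable_pt_lim_plus; [apply derivable_pt_lim_id | apply derivable_pt_lim_const].
  - apply derivable_pt_lim_power, H.
Qed.

Lemma rpow_increment_le p u h : 1 <= p -> 0 <= u -> 0 <= h ->
  rpow (u + h) p - rpow u p <= p * h * rpow (u + h) (p - 1).
Proof.
  intros Hp Hu [Hh | <-].
  2: { rewrite Rplus_0_r; pose proof (rpow_ge0 u (p - 1)); lra. }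
  pose proof (rpow_ge0 (u + h) (p - 1)) as Hr.
  destruct Hu as [Hu | <-].
  - rewrite !rpow_Rpower by lra.
    destruct (MVT_cor2 (fun t => Rpower (t + 0) p) (fun t => p * Rpower (t + 0) (p - 1))
                u (u + h)) as [c [Hc Hcb]];
      [lra | intros; apply derivable_pt_lim_Rpower_shift; lra |].
    rewrite !Rplus_0_r in Hc; rewrite Hc.
    assert (Rpower c (p - 1) <= Rpower (u + h) (p - 1)) by (apply Rle_Rpower_l; lra).
    rewrite rpow_Rpower in Hr by lra.
    replace (u + h - u) with h by ring.
    assert (0 <= p * h * (Rpower (u + h) (p - 1) - Rpower c (p - 1))) by (apply Rmult_le_pos; nra).
    lra.
  - rewrite Rplus_0_l in *; rewrite rpow_0_l.
    replace p with (1 + (p - 1)) at 1 by ring.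
    rewrite rpow_succ by lra.
    assert (0 <= (p - 1) * h * rpow h (p - 1)) by (apply Rmult_le_pos; nra).
    lra.
Qed.

Lemma Rpower_increment_mono p h w u : 1 <= p -> 0 <= h -> 0 < w <= u ->
  Rpower (w + h) p - Rpower w p <= Rpower (u + h) p - Rpower u p.
Proof.
  intros Hp Hh [Hw [Hwu | <-]]; [|lra].
  destruct (MVT_cor2 (fun t => Rpower (t + h) p - Rpower (t + 0) p)
              (fun t => p * Rpower (t + h) (p - 1) - p * Rpower (t + 0) (p - 1)) w u)
    as [c [Hc Hcb]]; [lra | intros; apply derivable_pt_lim_minus;
                            apply derivable_pt_lim_Rpower_shift; lra |].
  rewrite !Rplus_0_r in Hc.
  assert (Rpower c (p - 1) <= Rpower (c + h) (p - 1)) by (apply Rle_Rpower_l; lra).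
  assert (0 <= (p * Rpower (c + h) (p - 1) - p * Rpower c (p - 1)) * (u - w))
    by (apply Rmult_le_pos; nra).
  lra.
Qed.

Lemma young_rpow p d u v : 1 < p -> 0 < d -> 0 <= u -> 0 <= v ->
  u * rpow v (p - 1) <= d * rpow v p + Rpower d (1 - p) * rpow u p.
Proof.
  intros Hp Hd Hu Hv.
  pose proof (rpow_ge0 v (p - 1)); pose proof (rpow_ge0 u (p - 1)).
  pose proof (Rpower_pos d (1 - p)) as Hdp.
  assert (Ev : rpow v p = v * rpow v (p - 1))
    by (replace p with (1 + (p - 1)) at 1 by ring; apply rpow_succ, Hv).
  assert (Eu : rpow u p = u * rpow u (p - 1))
    by (replace p with (1 + (p - 1)) at 1 by ring; apply rpow_succ, Hu).
  destruct (Rle_lt_dec u (d * v)) as [Hc | Hc].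
  - assert (u * rpow v (p - 1) <= d * v * rpow v (p - 1)) by (apply Rmult_le_compat_r; lra).
    assert (0 <= Rpower d (1 - p) * rpow u p) by (rewrite Eu; apply Rmult_le_pos; nra).
    rewrite Ev; lra.
  - assert (Hvu : rpow v (p - 1) <= rpow u (p - 1) * Rpower d (1 - p)).
    { apply Rle_trans with (rpow (u * / d) (p - 1)).
      - apply rpow_le; [lra | split; [exact Hv |]].
        apply Rmult_le_reg_l with d; [exact Hd | field_simplify; lra].
      - pose proof (Rinv_0_lt_compat d Hd).
        rewrite rpow_mult, (rpow_Rpower (/ d)), Rpower_Rinv by lra.
        replace (1 - p) with (- (p - 1)) by ring; rewrite Rpower_Ropp; lra. }
    assert (u * rpow v (p - 1) <= u * (rpow u (p - 1) * Rpower d (1 - p)))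
      by (apply Rmult_le_compat_l; lra).
    assert (0 <= d * rpow v p) by (apply Rmult_le_pos; [lra | apply rpow_ge0]).
    rewrite Eu; lra.
Qed.

Lemma INR_S_pos k : 0 < INR (S k).
Proof. apply lt_0_INR; lia. Qed.

Lemma Rpower_1_minus m s : 0 < m -> Rpower m (1 - s) = m * / Rpower m s.
Proof.
  intros Hm; replace (1 - s) with (1 + - s) by ring.
  rewrite Rpower_plus, Rpower_Ropp, Rpower_1 by exact Hm; reflexivity.
Qed.

Definition zeta_term (s : R) (k : nat) : R := / Rpower (INR (S k)) s.

Definition zeta_tail (s : R) (n : nat) : R := zeta s - psum (zeta_term s) n.

Lemma zeta_term_pos s k : 0 < zeta_term s k.
Proof. apply Rinv_0_lt_compat, Rpower_pos. Qed.

Lemma zeta_term_0 s : zeta_term s 0 = 1.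
Proof. unfold zeta_term; simpl INR; rewrite Rpower_1_l; apply Rinv_1. Qed.

Lemma zeta_term_le s k j : 0 <= s -> (k <= j)%nat -> zeta_term s j <= zeta_term s k.
Proof.
  intros Hs Hkj; apply Rinv_le_contravar; [apply Rpower_pos |].
  apply Rle_Rpower_l; [exact Hs | split; [apply INR_S_pos | apply le_INR; lia]].
Qed.

(* mean value theorem for t^(1-s) on [k+1, k+2], whose derivative is at most 2^s (k+1)^-s *)
Lemma zeta_term_le_telescope s k : 1 < s ->
  zeta_term s k <=
  Rpower 2 s / (s - 1) * (Rpower (INR (S k)) (1 - s) - Rpower (INR (S (S k))) (1 - s)).
Proof.
  intros Hs; set (n := INR (S k)).
  assert (Hn : 1 <= n) by (unfold n; rewrite S_INR; pose proof (pos_INR k); lra).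
  replace (INR (S (S k))) with (n + 1) by (unfold n; rewrite (S_INR (S k)); ring).
  destruct (MVT_cor2 (fun t => Rpower (t + 0) (1 - s))
              (fun t => (1 - s) * Rpower (t + 0) (1 - s - 1)) n (n + 1))
    as [c [Hc Hcb]]; [lra | intros; apply derivable_pt_lim_Rpower_shift; lra |].
  rewrite !Rplus_0_r in Hc.
  replace (1 - s - 1) with (- s) in Hc by ring; rewrite Rpower_Ropp in Hc.
  assert (Hg : Rpower n (1 - s) - Rpower (n + 1) (1 - s) = (s - 1) * / Rpower c s)
    by (replace (n + 1 - n) with 1 in Hc by ring; lra).
  assert (Hc2 : Rpower c s <= Rpower 2 s * Rpower n s)
    by (rewrite Rpower_mult_distr by lra; apply Rle_Rpower_l; lra).
  pose proof (Rpower_pos c s); pose proof (Rpower_pos n s); pose proof (Rpower_pos 2 s).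
  replace (Rpower 2 s / (s - 1) * (Rpower n (1 - s) - Rpower (n + 1) (1 - s)))
    with (Rpower 2 s / Rpower c s) by (rewrite Hg; field; lra).
  unfold zeta_term; fold n.
  apply Rle_trans with (Rpower 2 s / (Rpower 2 s * Rpower n s)); [right; field; lra |].
  apply Rmult_le_compat_l; [lra | apply Rinv_le_contravar; lra].
Qed.

Lemma ex_series_zeta_term s : 1 < s -> ex_series (zeta_term s).
Proof.
  intros Hs; set (C := Rpower 2 s / (s - 1)).
  assert (HC : 0 < C) by (apply Rdiv_lt_0_compat; [apply Rpower_pos | lra]).
  apply ex_series_psum_bounded with C; [intros; left; apply zeta_term_pos |].
  intros n; eapply Rle_trans.
  - apply psum_le; intros i _; apply (zeta_term_le_telescope s i Hs).
  - set (g := fun i => - (C * Rpower (INR (S i)) (1 - s))).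
    rewrite (psum_ext _ (fun i => g (S i) - g i)) by (intros; unfold g, C; ring).
    rewrite psum_telescope; unfold g; change (INR 1) with 1; rewrite Rpower_1_l.
    pose proof (Rpower_pos (INR (S n)) (1 - s)); nra.
Qed.

Lemma psum_le_zeta s n : 1 < s -> psum (zeta_term s) n <= zeta s.
Proof.
  intros Hs; apply psum_le_Series;
    [intros; left; apply zeta_term_pos | apply ex_series_zeta_term, Hs].
Qed.

Lemma zeta_ge_1 s : 1 < s -> 1 <= zeta s.
Proof.
  intros Hs; pose proof (psum_le_zeta s 1 Hs) as H.
  change (psum (zeta_term s) 1) with (0 + zeta_term s 0) in H.
  rewrite zeta_term_0 in H; lra.
Qed.

Lemma zeta_tail_succ s n : zeta_tail s n - zeta_tail s (S n) = zeta_term s n.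
Proof. unfold zeta_tail; simpl; ring. Qed.

Lemma zeta_tail_le s i N : (i <= N)%nat -> zeta_tail s N <= zeta_tail s i.
Proof.
  intros H; unfold zeta_tail.
  pose proof (psum_le_psum (zeta_term s) i N (fun k _ => Rlt_le _ _ (zeta_term_pos s k)) H).
  lra.
Qed.

Lemma is_lim_seq_zeta_tail s : 1 < s -> is_lim_seq (zeta_tail s) 0.
Proof.
  intros Hs; replace 0 with (zeta s - zeta s) by ring.
  apply is_lim_seq_minus'; [apply is_lim_seq_const |].
  apply is_series_psum, Series_correct, ex_series_zeta_term, Hs.
Qed.

Lemma psum_block_ge w b m : (forall k, w (S k) <= w k) ->
  INR (S m) * w (b + m)%nat <= psum w (b + S m) - psum w b.
Proof.
  intros Hw; induction m as [|m IH].
  - rewrite Nat.add_0_r, Nat.add_1_r; simpl; lra.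
  - rewrite !Nat.add_succ_r in *.
    change (psum w (S (S (b + m)))) with (psum w (S (b + m)) + w (S (b + m))).
    rewrite (S_INR (S m)).
    assert (INR (S m) * w (S (b + m)) <= INR (S m) * w (b + m)%nat)
      by (apply Rmult_le_compat_l; [apply pos_INR | apply Hw]).
    lra.
Qed.

(* with q = m + 1, group the tail into blocks [q j, q (j+1)): each term of block j
   is at least (q (j+1))^-s = q^-s (j+1)^-s *)
Lemma zeta_tail_ge s m : 1 < s ->
  Rpower (INR (S m)) (1 - s) * (zeta s - 1) <= zeta_tail s (S m).
Proof.
  intros Hs; set (q := S m).
  assert (Hq : 0 < INR q) by apply INR_S_pos.
  assert (Blocks : forall J, Rpower (INR q) (1 - s) * (psum (zeta_term s) (S J) - 1)
                             <= psum (zeta_term s) (q * S J) - psum (zeta_term s) q).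
  { induction J as [|J IH].
    - rewrite Nat.mul_1_r; simpl; rewrite zeta_term_0; lra.
    - replace (q * S (S J))%nat with (q * S J + S m)%nat by (unfold q; lia).
      pose proof (psum_block_ge (zeta_term s) (q * S J) m
                    (fun k => zeta_term_le s k (S k) ltac:(lra) ltac:(lia))) as Hb.
      assert (E : INR (S m) * zeta_term s (q * S J + m)%nat
                  = Rpower (INR q) (1 - s) * zeta_term s (S J)).
      { unfold zeta_term; replace (S (q * S J + m)) with (q * S (S J))%nat by (unfold q; lia).
        rewrite mult_INR, <- Rpower_mult_distr, Rpower_1_minus by (apply INR_S_pos || exact Hq).
        pose proof (Rpower_pos (INR q) s); pose proof (Rpower_pos (INR (S (S J))) s).
        fold q; field; lra. }
      change (psum (zeta_term s) (S (S J))) with (psum (zeta_term s) (S J) + zeta_term s (S J)).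
      unfold q in *; lra. }
  apply (is_lim_seq_ub (fun J => Rpower (INR q) (1 - s) * (psum (zeta_term s) (S J) - 1))).
  - intros J; unfold zeta_tail.
    pose proof (psum_le_zeta s (q * S J) Hs); specialize (Blocks J); lra.
  - apply is_lim_seq_scal_l with (lu := zeta s - 1), is_lim_seq_minus';
      [| apply is_lim_seq_const].
    apply (is_lim_seq_incr_1 (psum (zeta_term s))), is_series_psum, Series_correct.
    apply ex_series_zeta_term, Hs.
Qed.

Lemma cesaro_eq x k : (forall i, 0 <= x i) -> cesaro x k = / INR (S k) * psum x (S k).
Proof.
  intros Hx; unfold cesaro; rewrite <- psum_sum_f_R0; f_equal.
  apply psum_ext; intros i; apply Rabs_right, Rle_ge, Hx.
Qed.

Lemma wterm_eq p a x k : 0 <= x k -> wterm p a x k = rpow (x k) p * Rpower (INR (S k)) a.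
Proof. intros Hx; unfold wterm; rewrite Rabs_right by lra; reflexivity. Qed.

Lemma wterm_ge0 p a x k : 0 <= wterm p a x k.
Proof. apply Rmult_le_pos; [apply rpow_ge0 | left; apply Rpower_pos]. Qed.

Lemma rpow_mul_zeta_term p a k :
  rpow (INR (S k)) p * zeta_term (p - a) k = Rpower (INR (S k)) a.
Proof.
  unfold zeta_term; rewrite rpow_Rpower by apply INR_S_pos.
  replace p with ((p - a) + a) at 1 by ring; rewrite Rpower_plus.
  pose proof (Rpower_pos (INR (S k)) (p - a)); field; lra.
Qed.

Lemma wterm_cesaro_eq p a x k : (forall i, 0 <= x i) ->
  wterm p a (cesaro x) k = rpow (psum x (S k)) p * zeta_term (p - a) k.
Proof.
  intros Hx; pose proof (INR_S_pos k) as Hk; pose proof (psum_nonneg x (S k) Hx).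
  pose proof (Rinv_0_lt_compat _ Hk).
  rewrite wterm_eq by (rewrite cesaro_eq by exact Hx; apply Rmult_le_pos; lra).
  rewrite cesaro_eq by exact Hx.
  rewrite rpow_mult, (rpow_Rpower (/ _)), Rpower_Rinv by lra.
  rewrite <- (rpow_mul_zeta_term p a k), (rpow_Rpower (INR (S k))) by exact Hk.
  pose proof (Rpower_pos (INR (S k)) p); field; lra.
Qed.

Lemma psum_rpow_increments p x n :
  psum (fun i => rpow (psum x (S i)) p - rpow (psum x i) p) n = rpow (psum x n) p.
Proof.
  pose proof (psum_telescope (fun i => rpow (psum x i) p) n) as H; cbv beta in H.
  rewrite H; change (psum x 0) with 0; rewrite rpow_0_l; ring.
Qed.

Lemma hardy_partial_bound p a x N d : 1 < p -> a < p - 1 -> (forall i, 0 <= x i) -> 0 < d ->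
  psum (wterm p a (cesaro x)) N <=
  p * (Rpower 2 (p - a) / (p - a - 1)) *
  (d * psum (wterm p a (cesaro x)) N + Rpower d (1 - p) * psum (wterm p a x) N).
Proof.
  intros Hp Ha Hx Hd; set (s := p - a); set (C := Rpower 2 s / (s - 1)).
  assert (HC : 0 < C) by (apply Rdiv_lt_0_compat; [apply Rpower_pos | unfold s; lra]).
  set (G := fun i => C * Rpower (INR (S i)) (1 - s)).
  set (D := fun i => rpow (psum x (S i)) p - rpow (psum x i) p).
  assert (HD : forall n, psum D n = rpow (psum x n) p) by apply psum_rpow_increments.
  assert (Majorant : psum (wterm p a (cesaro x)) N
                     <= psum (fun n => (G n - G (S n)) * psum D (S n)) N).
  { apply psum_le; intros i _; rewrite wterm_cesaro_eq, HD by exact Hx; fold s.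
    rewrite Rmult_comm; apply Rmult_le_compat_r; [apply rpow_ge0 |].
    unfold G; pose proof (zeta_term_le_telescope s i ltac:(unfold s; lra)); fold C in H; lra. }
  rewrite psum_by_parts in Majorant.
  assert (Tail : 0 <= G N * psum D N).
  { rewrite HD; apply Rmult_le_pos; [left; apply Rmult_lt_0_compat; [exact HC | apply Rpower_pos]
                                    | apply rpow_ge0]. }
  assert (Termwise : forall i, D i * G i <=
            p * C * (d * wterm p a (cesaro x) i + Rpower d (1 - p) * wterm p a x i)).
  { intros i; set (m := INR (S i)); assert (Hm : 0 < m) by apply INR_S_pos.
    pose proof (psum_nonneg x i Hx); pose proof (zeta_term_pos s i); specialize (Hx i) as Hxi.
    assert (HDi : D i <= p * x i * rpow (psum x (S i)) (p - 1))
      by (apply rpow_increment_le; lra).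
    assert (HG : G i = C * (m * zeta_term s i)) by (unfold G; rewrite Rpower_1_minus; auto).
    pose proof (young_rpow p d (x i * m) (psum x (S i)) Hp Hd ltac:(nra)
                  ltac:(simpl; lra)) as Hy.
    rewrite rpow_mult in Hy by lra.
    rewrite wterm_cesaro_eq by exact Hx.
    rewrite wterm_eq, <- (rpow_mul_zeta_term p a i) by exact Hxi; fold s m.
    rewrite HG.
    assert (0 <= C * (m * zeta_term s i)) by (apply Rmult_le_pos; nra).
    assert (0 <= p * C * zeta_term s i) by (apply Rmult_le_pos; nra).
    apply Rle_trans with (p * x i * rpow (psum x (S i)) (p - 1) * (C * (m * zeta_term s i)));
      [apply Rmult_le_compat_r; lra |].
    replace (p * x i * rpow (psum x (S i)) (p - 1) * (C * (m * zeta_term s i)))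
      with (p * C * zeta_term s i * (x i * m * rpow (psum x (S i)) (p - 1))) by ring.
    apply Rle_trans with (p * C * zeta_term s i *
                            (d * rpow (psum x (S i)) p
                             + Rpower d (1 - p) * (rpow (x i) p * rpow m p)));
      [apply Rmult_le_compat_l; lra | right; ring]. }
  assert (Sum := psum_le _ _ N (fun i _ => Termwise i)).
  rewrite psum_scal, psum_plus, !psum_scal in Sum.
  fold s C; lra.
Qed.

Lemma ex_series_wterm_cesaro p a x : 1 < p -> a < p - 1 -> (forall i, 0 <= x i) ->
  ex_series (wterm p a x) -> ex_series (wterm p a (cesaro x)).
Proof.
  intros Hp Ha Hx Hs; set (C := Rpower 2 (p - a) / (p - a - 1)).
  assert (HC : 0 < C) by (apply Rdiv_lt_0_compat; [apply Rpower_pos | lra]).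
  set (d := / (2 * p * C)).
  assert (Hd : 0 < d) by (apply Rinv_0_lt_compat; nra).
  assert (Hpd : p * C * d = / 2) by (unfold d; field; lra).
  pose proof (Rpower_pos d (1 - p)).
  apply ex_series_psum_bounded with (2 * p * C * Rpower d (1 - p) * Series (wterm p a x));
    [intros; apply wterm_ge0 |].
  intros n; pose proof (hardy_partial_bound p a x n d Hp Ha Hx Hd) as Hb; fold C in Hb.
  assert (p * C * Rpower d (1 - p) * psum (wterm p a x) n
          <= p * C * Rpower d (1 - p) * Series (wterm p a x)).
  { apply Rmult_le_compat_l; [apply Rmult_le_pos; nra |].
    apply psum_le_Series; [intros; apply wterm_ge0 | exact Hs]. }
  replace (p * C * (d * psum (wterm p a (cesaro x)) n + Rpower d (1 - p) * psum (wterm p a x) n))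
    with (p * C * d * psum (wterm p a (cesaro x)) n
          + p * C * Rpower d (1 - p) * psum (wterm p a x) n) in Hb by ring.
  rewrite Hpd in Hb; lra.
Qed.

Definition pow_increment (p : R) (k : nat) : R := rpow (INR (S k)) p - rpow (INR k) p.

Lemma pow_increment_ge0 p k : 0 <= p -> 0 <= pow_increment p k.
Proof.
  intros Hp; unfold pow_increment.
  pose proof (rpow_le (INR k) (INR (S k)) p Hp
                (conj (pos_INR k) (le_INR _ _ (Nat.le_succ_diag_r k)))).
  lra.
Qed.

Lemma psum_pow_increment p n : psum (pow_increment p) n = rpow (INR n) p.
Proof.
  pose proof (psum_telescope (fun i => rpow (INR i) p) n) as H; cbv beta in H.
  unfold pow_increment; rewrite H; change (INR 0) with 0; rewrite rpow_0_l; ring.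
Qed.

Lemma nonincr_le x j k : (forall i, x (S i) <= x i) -> (j <= k)%nat -> x k <= x j.
Proof. intros Hx Hjk; induction Hjk as [|k _ IH]; [lra | specialize (Hx k); lra]. Qed.

Lemma INR_mul_le_psum x n : (forall i, x (S i) <= x i) -> INR n * x n <= psum x n.
Proof.
  intros Hx; rewrite <- psum_const; apply psum_le; intros i Hi.
  apply nonincr_le; [exact Hx | lia].
Qed.

(* since [INR k * x k <= psum x k], convexity of t^p bounds [x_k^p ((k+1)^p - k^p)]
   by the increment of t^p from [psum x k] to [psum x k + x k] *)
Lemma psum_pow_increment_le p x n : 1 <= p -> nonneg_nonincr x ->
  psum (fun i => rpow (x i) p * pow_increment p i) n <= rpow (psum x n) p.
Proof.
  intros Hp [Hx0 Hx1]; induction n as [|n IH]; [simpl; rewrite rpow_0_l; lra |].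
  change (psum x (S n)) with (psum x n + x n); simpl psum.
  enough (rpow (x n) p * pow_increment p n <= rpow (psum x n + x n) p - rpow (psum x n) p)
    by lra.
  pose proof (INR_mul_le_psum x n Hx1) as Hw.
  unfold pow_increment; destruct n as [|n].
  - change (psum x 0) with 0; change (INR 1) with 1; change (INR 0) with 0.
    rewrite Rplus_0_l, rpow_0_l, (rpow_Rpower 1), Rpower_1_l by lra; lra.
  - destruct (Hx0 (S n)) as [Hpos | Hzero].
    + pose proof (INR_S_pos n); pose proof (INR_S_pos (S n)).
      assert (Hw0 : 0 < INR (S n) * x (S n)) by nra.
      pose proof (Rpower_increment_mono p (x (S n)) (INR (S n) * x (S n)) (psum x (S n))
                    Hp ltac:(lra) ltac:(lra)) as Hc.
      replace (INR (S n) * x (S n) + x (S n)) with (INR (S (S n)) * x (S n)) in Hc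
        by (rewrite (S_INR (S n)); ring).
      rewrite <- !Rpower_mult_distr in Hc by lra.
      rewrite !rpow_Rpower by lra; lra.
    + rewrite <- Hzero, rpow_0_l, Rplus_0_r; lra.
Qed.

Lemma psum_weighted_tail_le_Series p a x M : 1 < p -> a < p - 1 -> nonneg_nonincr x ->
  ex_series (wterm p a (cesaro x)) ->
  psum (fun i => rpow (x i) p * pow_increment p i * zeta_tail (p - a) i) M
  <= Series (wterm p a (cesaro x)).
Proof.
  intros Hp Ha Hx HY; set (s := p - a); set (T := zeta_tail s).
  set (D := fun i => rpow (x i) p * pow_increment p i).
  assert (HD : forall i, 0 <= D i)
    by (intros; apply Rmult_le_pos; [apply rpow_ge0 | apply pow_increment_ge0; lra]).
  assert (Bound : forall N, (M <= N)%nat ->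
            psum (fun i => D i * T i) M - T N * psum D M <= Series (wterm p a (cesaro x))).
  { intros N HMN.
    apply Rle_trans with (psum (fun i => D i * (T i - T N)) N).
    - replace (psum (fun i => D i * T i) M - T N * psum D M)
        with (psum (fun i => D i * (T i - T N)) M)
        by (rewrite <- psum_scal, <- psum_minus; apply psum_ext; intros; ring).
      apply psum_le_psum; [| exact HMN].
      intros i Hi; apply Rmult_le_pos; [apply HD |].
      pose proof (zeta_tail_le s i N ltac:(lia)); unfold T; lra.
    - apply Rle_trans with (psum (wterm p a (cesaro x)) N);
        [| apply psum_le_Series; [intros; apply wterm_ge0 | exact HY]].
      rewrite (psum_ext _ (fun i => D i * T i - T N * D i)) by (intros; ring).
      rewrite psum_minus, psum_scal, <- psum_by_parts.
      apply psum_le; intros n _.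
      rewrite wterm_cesaro_eq by apply Hx; fold s.
      unfold T; rewrite zeta_tail_succ, Rmult_comm.
      apply Rmult_le_compat_r; [left; apply zeta_term_pos |].
      apply psum_pow_increment_le; [lra | exact Hx]. }
  apply (is_lim_seq_le_loc (fun N => psum (fun i => D i * T i) M - T N * psum D M)
           (fun _ => Series (wterm p a (cesaro x)))
           (psum (fun i => D i * T i) M) (Series (wterm p a (cesaro x))));
    [exists M; exact Bound | | apply is_lim_seq_const].
  rewrite <- (Rminus_0_r (psum (fun i => D i * T i) M)), <- (Rmult_0_l (psum D M)) at 1.
  apply is_lim_seq_minus'; [apply is_lim_seq_const |].
  apply is_lim_seq_mult'; [apply is_lim_seq_zeta_tail; unfold s; lra | apply is_lim_seq_const].
Qed.

Lemma psum_pow_increment_tail p a m :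
  psum (fun i => pow_increment p i * zeta_tail (p - a) i) m
  = psum (fun i => Rpower (INR (S i)) a) m + rpow (INR m) p * zeta_tail (p - a) m.
Proof.
  pose proof (psum_by_parts (zeta_tail (p - a)) (pow_increment p) m) as H.
  rewrite psum_pow_increment in H.
  rewrite (psum_ext _ (fun i => Rpower (INR (S i)) a)) in H.
  - lra.
  - intros i; rewrite zeta_tail_succ, psum_pow_increment, Rmult_comm.
    apply rpow_mul_zeta_term.
Qed.

Lemma zeta_mul_psum_le p a m : 1 < p -> 0 <= a -> a < p - 1 ->
  zeta (p - a) * psum (fun i => Rpower (INR (S i)) a) m
  <= psum (fun i => pow_increment p i * zeta_tail (p - a) i) m.
Proof.
  intros Hp Ha0 Ha1; rewrite psum_pow_increment_tail.
  set (W := psum (fun i => Rpower (INR (S i)) a) m).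
  destruct m as [|m].
  - unfold W; simpl; rewrite rpow_0_l; lra.
  - pose proof (zeta_tail_ge (p - a) m ltac:(lra)) as HT.
    pose proof (zeta_ge_1 (p - a) ltac:(lra)).
    set (q := INR (S m)) in *; assert (Hq : 0 < q) by apply INR_S_pos.
    assert (HW : W <= q * Rpower q a).
    { unfold W, q; rewrite <- psum_const; apply psum_le; intros i Hi.
      apply Rle_Rpower_l; [exact Ha0 | split; [apply INR_S_pos | apply le_INR; lia]]. }
    assert (Hpow : Rpower q p * Rpower q (1 - (p - a)) = q * Rpower q a).
    { rewrite <- Rpower_plus; replace (p + (1 - (p - a))) with (1 + a) by ring.
      rewrite Rpower_plus, Rpower_1 by exact Hq; reflexivity. }
    rewrite rpow_Rpower by exact Hq.
    pose proof (Rpower_pos q p).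
    assert ((zeta (p - a) - 1) * W <= (zeta (p - a) - 1) * (q * Rpower q a))
      by (apply Rmult_le_compat_l; lra).
    assert (Rpower q p * (Rpower q (1 - (p - a)) * (zeta (p - a) - 1))
            <= Rpower q p * zeta_tail (p - a) (S m))
      by (apply Rmult_le_compat_l; lra).
    rewrite <- Rmult_assoc, Hpow in *; lra.
Qed.

Lemma hardy_lower_bound p a x : 1 < p -> 0 <= a -> a < p - 1 -> nonneg_nonincr x ->
  ex_series (wterm p a x) -> ex_series (wterm p a (cesaro x)) ->
  zeta (p - a) * Series (wterm p a x) <= Series (wterm p a (cesaro x)).
Proof.
  intros Hp Ha0 Ha1 Hx HX HY; pose proof Hx as [Hx0 Hx1].
  apply (is_lim_seq_ub (fun M => zeta (p - a) * psum (wterm p a x) M)).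
  2: { apply is_lim_seq_scal_l with (lu := Series (wterm p a x)).
       apply is_series_psum, Series_correct, HX. }
  intros M; eapply Rle_trans; [| apply (psum_weighted_tail_le_Series p a x M); auto].
  pose proof (abel_nonneg (fun i => rpow (x i) p)
                (fun i => pow_increment p i * zeta_tail (p - a) i
                          - zeta (p - a) * Rpower (INR (S i)) a) M
                (fun k => rpow_ge0 _ _)
                (fun k => rpow_le (x (S k)) (x k) p ltac:(lra) (conj (Hx0 (S k)) (Hx1 k))))
    as Habel.
  rewrite (psum_ext _ (fun i => rpow (x i) p * pow_increment p i * zeta_tail (p - a) i
                                - zeta (p - a) * wterm p a x i)) in Habel.
  - rewrite psum_minus, psum_scal in Habel.
    apply Rminus_le_0, Habel; intros m.
    rewrite psum_minus, psum_scal; pose proof (zeta_mul_psum_le p a m Hp Ha0 Ha1); lra.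
  - intros i; rewrite wterm_eq by apply Hx0; ring.
Qed.

Lemma rpow_le_inv_mul z X Y q : 0 < z -> 0 <= X -> z * X <= Y -> 0 <= q ->
  rpow X q <= / rpow z q * rpow Y q.
Proof.
  intros Hz HX HXY Hq.
  assert (Hr : 0 < rpow z q) by (rewrite rpow_Rpower by exact Hz; apply Rpower_pos).
  apply Rmult_le_reg_l with (rpow z q); [exact Hr |].
  rewrite <- Rmult_assoc, Rinv_r, Rmult_1_l, <- rpow_mult by lra.
  apply rpow_le; [exact Hq | split; [apply Rmult_le_pos |]; lra].
Qed.

Lemma e1_nonneg_nonincr : nonneg_nonincr e1.
Proof. split; intros [|[|k]]; simpl; lra. Qed.

Lemma psum_e1 k : psum e1 (S k) = 1.
Proof. induction k as [|k IH]; [simpl; ring | change (psum e1 (S k) + 0 = 1); lra]. Qed.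

Lemma is_series_wterm_e1 p a : 0 < p -> is_series (wterm p a e1) 1.
Proof.
  intros Hp; apply is_series_psum, is_lim_seq_incr_1.
  apply is_lim_seq_ext with (fun _ => 1); [| apply is_lim_seq_const].
  intros n; induction n as [|n IH].
  - simpl; rewrite wterm_eq by (simpl; lra); simpl.
    rewrite rpow_Rpower, !Rpower_1_l by lra; ring.
  - change (1 = psum (wterm p a e1) (S n) + wterm p a e1 (S n)).
    rewrite <- IH, wterm_eq by (simpl; lra); simpl; rewrite rpow_0_l; ring.
Qed.

Lemma Series_wterm_cesaro_e1 p a : Series (wterm p a (cesaro e1)) = zeta (p - a).
Proof.
  apply Series_ext; intros k.
  rewrite wterm_cesaro_eq, psum_e1, rpow_Rpower, Rpower_1_l by (apply e1_nonneg_nonincr || lra).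
  apply Rmult_1_l.
Qed.

Theorem theorem3p5 (p a : R) (hp : 1 < p) (ha0 : 0 <= a) (ha1 : a < p - 1) :
  (forall x : nat -> R,
     nonneg_nonincr x ->
     ex_series (wterm p a x) ->
     ex_series (wterm p a (cesaro x)) /\
     wnorm p a x <= / rpow (zeta (p - a)) (/ p) * wnorm p a (cesaro x))
  /\
  (nonneg_nonincr e1 /\ ex_series (wterm p a e1) /\
   wnorm p a e1 = / rpow (zeta (p - a)) (/ p) * wnorm p a (cesaro e1) /\
   wnorm p a e1 <> 0).
Proof.
  assert (Hz : 1 <= zeta (p - a)) by (apply zeta_ge_1; lra).
  assert (Hq : 0 <= / p) by (left; apply Rinv_0_lt_compat; lra).
  split.
  - intros x Hx HX.
    assert (HY := ex_series_wterm_cesaro p a x hp ha1 (proj1 Hx) HX).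
    split; [exact HY |].
    apply rpow_le_inv_mul; [lra | | apply hardy_lower_bound | exact Hq]; auto.
    change 0 with (psum (wterm p a x) 0); apply psum_le_Series; [apply wterm_ge0 | exact HX].
  - assert (HS : Series (wterm p a e1) = 1)
      by (apply is_series_unique, is_series_wterm_e1; lra).
    assert (Hw1 : wnorm p a e1 = 1)
      by (unfold wnorm; rewrite HS, rpow_Rpower, Rpower_1_l by lra; reflexivity).
    split; [exact e1_nonneg_nonincr |].
    split; [exists 1; apply is_series_wterm_e1; lra |].
    rewrite Hw1; unfold wnorm; rewrite Series_wterm_cesaro_e1.
    split; [field | lra].
    rewrite rpow_Rpower by lra; apply Rgt_not_eq, Rpower_pos.
Qed.
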